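(* Fix a base $\beta\ge2$ and mantissa length $t$, and let $u=\beta^{1-t}/2$. For every real matrix $A$ together with a floating-point elimination run that belongs to $\widehat{\mathbf{PP}}_n(\mathbb{R})$, there exists $B\in\mathbf{PP}_n(\mathbb{R})$ such that $b^{(k)}_{i,j}=\hat a^{(k)}_{i,j}$ whenever $i=k$ or $j=k$, and $$\big|\hat a^{(k)}_{i,j}-b^{(k)}_{i,j}\big|\le u\sum_{\ell=k}^{\min\{i,j\}-1}\Big[|\hat a^{(\ell)}_{i,j}|+|\hat a^{(\ell)}_{\ell,j}|(3+u)\Big]$$ for all $k=1,\dots,n-1$ and all $i,j\in\{k,\dots,n\}$.
   Context: Exact Gaussian elimination without pivoting on $B=(b_{i,j})$: $b^{(1)}_{i,j}=b_{i,j}$, $b^{(k+1)}_{i,j}=b^{(k)}_{i,j}-b^{(k)}_{i,k}b^{(k)}_{k,j}/b^{(k)}_{k,k}$ for $k+1\le i,j\le n$. $\mathbf{PP}_n(\mathbb{R})$ is the set of invertible real $n\times n$ matrices for which this is defined (nonzero pivots) and $|b^{(k)}_{i,k}|\le|b^{(k)}_{k,k}|$ for all $k$ and $i\ge k$. Floating-point model (overflow/underflow ignored): a floating-point elimination run on a real $n\times n$ matrix $A$ is an array of numbers $\hat a^{(k)}_{i,j}$ given by $\hat a^{(1)}_{i,j}=a_{i,j}(1+\phi^{(0)}_{i,j})$ and $\hat a^{(k+1)}_{i,j}=\big[\hat a^{(k)}_{i,j}-s_{i,k}\hat a^{(k)}_{k,j}(1+\theta^{(k)}_{i,j})\big](1+\phi^{(k)}_{i,j})$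 for $k+1\le i,j\le n$, $k=1,\dots,n-1$, where $s_{i,k}=\frac{\hat a^{(k)}_{i,k}}{\hat a^{(k)}_{k,k}}(1+\varphi_{i,k})$, for some choice of parameters with $|\theta^{(k)}_{i,j}|,|\phi^{(k)}_{i,j}|,|\varphi_{i,k}|\le u$. $\widehat{\mathbf{PP}}_n(\mathbb{R})$ consists of (invertible $A$, run) pairs such that all $\hat a^{(k)}_{k,k}\ne0$, $|\hat a^{(k)}_{i,k}|\le|\hat a^{(k)}_{k,k}|$ for all $k$ and $i\ge k$, and moreover $|s_{i,k}|\le1$ and $|s_{i,k}(1+\theta^{(k)}_{i,j})|\le1$ for all $i,j,k$. *)

From HB Require Import structures.
From mathcomp Require Import all_boot all_order all_algebra.
Set Implicit Arguments. Unset Strict Implicit. Unset Printing Implicit Defensive.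
Import Order.TTheory GRing.Theory Num.Theory.
Local Open Scope ring_scope.

Section GE.
Variable R : realFieldType.
Variable n : nat.

(* 1-based entry access: ent A i j = a_{i,j} for 1 <= i, j <= n (0 outside). *)
Definition ent (A : 'M[R]_n) (i j : nat) : R :=
  match (insub i.-1 : option 'I_n), (insub j.-1 : option 'I_n) with
  | Some i', Some j' => A i' j'
  | _, _ => 0
  end.

(* Exact elimination.  gx B m = b^{(m+1)} (1-based indices).  Entries
   outside the active block k+1 <= i, j are simply carried over (they are
   never used). *)
Fixpoint gx (B : 'M[R]_n) (m : nat) (i j : nat) {struct m} : R :=
  match m with
  | 0 => ent B i j
  | m'.+1 =>
      let k := m'.+1 in
      if (k < i)%N && (k < j)%N then
        gx B m' i j - gx B m' i k * gx B m' k j / gx B m' k k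
      else gx B m' i j
  end.

Definition bel (B : 'M[R]_n) (k i j : nat) : R := gx B k.-1 i j.

Definition PP (B : 'M[R]_n) : Prop :=
  B \in unitmx /\
  (forall k, (1 <= k < n)%N -> bel B k k k != 0) /\
  (forall k i, (1 <= k)%N -> (k <= i <= n)%N -> `|bel B k i k| <= `|bel B k k k|).

(* Floating-point elimination run on A with rounding parameters
   th k i j = theta^{(k)}_{i,j}, ph k i j = phi^{(k)}_{i,j}, vp i k = varphi_{i,k}.
   fa m = hat a^{(m+1)}. *)
Fixpoint fa (A : 'M[R]_n) (th ph : nat -> nat -> nat -> R) (vp : nat -> nat -> R)
    (m : nat) (i j : nat) {struct m} : R :=
  match m with
  | 0 => ent A i j * (1 + ph 0%N i j)
  | m'.+1 =>
      let k := m'.+1 in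
      if (k < i)%N && (k < j)%N then
        (fa A th ph vp m' i j
          - (fa A th ph vp m' i k / fa A th ph vp m' k k * (1 + vp i k))
            * fa A th ph vp m' k j * (1 + th k i j)) * (1 + ph k i j)
      else fa A th ph vp m' i j
  end.

Definition ahat A th ph vp (k i j : nat) : R := fa A th ph vp k.-1 i j.

Definition smul A th ph vp (i k : nat) : R :=
  ahat A th ph vp k i k / ahat A th ph vp k k k * (1 + vp i k).

Definition fp_params (u : R) (th ph : nat -> nat -> nat -> R) (vp : nat -> nat -> R) : Prop :=
  (forall k i j, `|th k i j| <= u) /\ (forall k i j, `|ph k i j| <= u) /\
  (forall i k, `|vp i k| <= u).

Definition PPhat (A : 'M[R]_n) th ph vp : Prop :=
  A \in unitmx /\
  (forall k, (1 <= k <= n)%N -> ahat A th ph vp k k k != 0) /\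
  (forall k i, (1 <= k)%N -> (k <= i <= n)%N ->
     `|ahat A th ph vp k i k| <= `|ahat A th ph vp k k k|) /\
  (forall k i j, (1 <= k < n)%N -> (k < i <= n)%N -> (k < j <= n)%N ->
     `|smul A th ph vp i k| <= 1 /\ `|smul A th ph vp i k * (1 + th k i j)| <= 1).

End GE.

Definition unit_roundoff (R : realFieldType) (beta t : nat) : R :=
  (beta%:R : R) ^ (1 - t%:Z) / 2.

From HB Require Import structures.
From mathcomp Require Import all_boot all_order all_algebra.
From mathcomp Require Import ring lra zify.
Import Order.TTheory GRing.Theory Num.Theory.
Local Open Scope ring_scope.

(* Given a floating-point run a = ahat on A, we write down the exact matrix
     B_{ij} = a^{(m)}_{ij} + sum_{l<m} a^{(l)}_{il} a^{(l)}_{lj} / a^{(l)}_{ll},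
   m = min(i, j), i.e. the matrix whose LU factors are the computed multipliers
   a^{(l)}_{il}/a^{(l)}_{ll} and the computed pivot rows a^{(l)}_{lj}.
   1. Exact elimination on B reproduces the same kind of partial sums:
      b^{(k)}_{ij} = a^{(m)}_{ij} + sum_{k<=l<m} a_{il} a_{lj}/a_{ll}; in
      particular b^{(k)} and a^{(k)} agree on row and column k, so B inherits
      the nonzero pivots and the pivot-dominance of the run (B is in PP_n).
   2. Telescoping, a^{(k)}_{ij} - b^{(k)}_{ij} is the sum over l of the local
      errors a^{(l)}_{ij} - a^{(l+1)}_{ij} - a_{il} a_{lj}/a_{ll} of single
      floating-point updates, each bounded by u (|a^{(l)}_{ij}| + (3+u)|a^{(l)}_{lj}|)
      thanks to |s_{i,l}| <= 1 and |s_{i,l}(1+theta)| <= 1 ([update_error]).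
   3. B = L U with L unit lower and U upper triangular with the nonzero pivots
      on its diagonal, hence B is invertible. *)

Lemma norm_contraction_mul (R : realFieldType) (a b u : R) :
  `|a| <= 1 -> `|b| <= u -> `|a * b| <= u.
Proof. by move=> ha hb; rewrite normrM -[u]mul1r; apply: ler_pM. Qed.

(* Local error of one floating-point update x <- (x - r(1+vp) y (1+th))(1+ph)
   compared with the exact update x - r y, where r is the exact multiplier. *)
Lemma update_error (R : realFieldType) (u x y r vp th ph : R) :
  0 <= u -> `|th| <= u -> `|ph| <= u -> `|vp| <= u -> `|r| <= 1 ->
  `|r * (1 + vp)| <= 1 -> `|r * (1 + vp) * (1 + th)| <= 1 ->
  `|x - (x - r * (1 + vp) * y * (1 + th)) * (1 + ph) - r * y|
    <= u * (`|x| + `|y| * (3 + u)).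
Proof.
move=> u0 hth hph hvp hr hs hst.
have -> : x - (x - r * (1 + vp) * y * (1 + th)) * (1 + ph) - r * y =
   - (ph * x) + y * (r * (1 + vp) * (1 + th) * ph + r * (1 + vp) * th + r * vp)
  by ring.
have rel_err : `|r * (1 + vp) * (1 + th) * ph + r * (1 + vp) * th + r * vp|
                 <= u * (3 + u).
  apply: (le_trans (ler_normD _ _)); apply: (@le_trans _ _ (u + u + u)); last first.
    by rewrite mulrDr; nra.
  apply: lerD; last exact: norm_contraction_mul.
  by apply: (le_trans (ler_normD _ _)); apply: lerD; apply: norm_contraction_mul.
apply: (le_trans (ler_normD _ _)); rewrite normrN [u * _]mulrDr; apply: lerD.
  by rewrite normrM; apply: ler_wpM2r.
by rewrite normrM mulrCA; apply: ler_wpM2l.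
Qed.

Section BackwardMatrix.
Variables (R : realFieldType) (n : nat).
Variables (A : 'M[R]_n) (th ph : nat -> nat -> nat -> R) (vp : nat -> nat -> R).
Local Notation a := (ahat A th ph vp).

Definition partial_entry (k i j : nat) : R :=
  a (minn i j) i j + \sum_(k <= l < minn i j) (a l i l * a l l j / a l l l).

Definition backward_matrix : 'M[R]_n := \matrix_(i, j) partial_entry 1 i.+1 j.+1.
Local Notation B := backward_matrix.

Lemma partial_entry_edge k i j : minn i j = k -> partial_entry k i j = a k i j.
Proof. by move=> h; rewrite /partial_entry h big_geq // addr0. Qed.

Lemma ent_backward_matrix i j : (1 <= i <= n)%N -> (1 <= j <= n)%N ->
  ent B i j = partial_entry 1 i j.
Proof.
case: i => // i; case: j => // j /= hi hj.
by rewrite /ent /= (insubT (fun k => k < n)%N hi) (insubT (fun k => k < n)%N hj) mxE.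
Qed.

Lemma bel_backward_matrix k i j : (1 <= k)%N -> (k <= i <= n)%N -> (k <= j <= n)%N ->
  bel B k i j = partial_entry k i j.
Proof.
case: k => // k _; elim: k i j => [|k IH] i j /andP[hi hin] /andP[hj hjn].
  by rewrite /bel /= ent_backward_matrix ?hi ?hj ?hin ?hjn.
rewrite /bel /= hi hj /=.
have IH' := IH; rewrite /bel /= in IH'.
rewrite !IH' ?hin ?hjn ?(ltnW hi) ?(ltnW hj) ?leqnn /=; try lia.
rewrite (partial_entry_edge k.+1 i k.+1); last by apply/minn_idPr; lia.
rewrite (partial_entry_edge k.+1 k.+1 j); last by apply/minn_idPl; lia.
rewrite (partial_entry_edge k.+1 k.+1 k.+1) ?minnn //.
rewrite /partial_entry big_ltn; last by rewrite leq_min hi hj.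
ring.
Qed.

Lemma bel_backward_matrix_edge k i j : (1 <= k)%N -> (k <= i <= n)%N ->
  (k <= j <= n)%N -> (i == k) || (j == k) -> bel B k i j = a k i j.
Proof.
move=> hk hi hj hij; rewrite bel_backward_matrix // partial_entry_edge //.
by case/orP: hij => /eqP ->; lia.
Qed.

Lemma ahat_step l i j : (1 <= l)%N -> (l < i)%N -> (l < j)%N ->
  a l.+1 i j = (a l i j - (a l i l / a l l l * (1 + vp i l)) * a l l j * (1 + th l i j))
                 * (1 + ph l i j).
Proof. by case: l => // l _ hi hj; rewrite /ahat /= hi hj. Qed.

Lemma backward_error_telescope k i j : (k <= minn i j)%N ->
  a k i j - partial_entry k i j =
  \sum_(k <= l < minn i j) (a l i j - a l.+1 i j - a l i l * a l l j / a l l l).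
Proof.
move=> hk; rewrite sumrB (telescope_sumr_eq (fun l => - a l i j)) //.
  by rewrite /partial_entry; ring.
by move=> l _; rewrite opprK addrC.
Qed.

Lemma backward_error_bound u k i j : fp_params u th ph vp -> PPhat A th ph vp ->
  (1 <= k)%N -> (k <= i <= n)%N -> (k <= j <= n)%N ->
  `|a k i j - partial_entry k i j| <=
     u * \sum_(k <= l < minn i j) (`|a l i j| + `|a l l j| * (3 + u)).
Proof.
move=> [Hth [Hph Hvp]] [_ [Hpiv [Hdom Hs]]] hk /andP[hi hin] /andP[hj hjn].
have u0 : 0 <= u by apply: le_trans (Hth 0%N 0%N 0%N).
rewrite backward_error_telescope ?leq_min ?hi ?hj // mulr_sumr.
apply: (le_trans (ler_norm_sum _ _ _)).
rewrite big_nat [X in _ <= X]big_nat; apply: ler_sum => l /andP[hkl].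
rewrite leq_min => /andP[hli hlj].
have [hs hst] := Hs l i j ltac:(lia) ltac:(lia) ltac:(lia).
have mult_le1 : `|a l i l / a l l l| <= 1.
  rewrite normrM normfV ler_pdivrMr ?normr_gt0 ?mul1r; last by apply: Hpiv; lia.
  by apply: Hdom; lia.
rewrite mulrAC ahat_step; try lia.
exact: update_error.
Qed.

Definition mult_matrix : 'M[R]_n := \matrix_(i, l)
  (if (l < i)%N then a l.+1 i.+1 l.+1 / a l.+1 l.+1 l.+1
   else if (l == i :> nat) then 1 else 0).

Definition pivot_matrix : 'M[R]_n :=
  \matrix_(l, j) (if (l <= j)%N then a l.+1 l.+1 j.+1 else 0).

(* Invertibility of B needs the computed pivots to be nonzero. *)
Hypothesis pivots_nz : forall k, (1 <= k <= n)%N -> a k k k != 0.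

Lemma backward_matrix_LU : B = mult_matrix *m pivot_matrix.
Proof.
apply/matrixP => i j; rewrite !mxE.
pose F (l : nat) := (if (l < i)%N then a l.+1 i.+1 l.+1 / a l.+1 l.+1 l.+1
   else if (l == i :> nat) then 1 else 0) * (if (l <= j)%N then a l.+1 l.+1 j.+1 else 0).
rewrite (eq_bigr (fun l : 'I_n => F l)); last by move=> l _; rewrite !mxE.
rewrite -(big_mkord xpredT F).
have hi := ltn_ord i; have hj := ltn_ord j.
(* only the indices l <= min(i, j) contribute *)
rewrite (big_cat_nat _ (n := (minn i j).+1)) //=; last by lia.
rewrite big_nat_recr //= [X in _ + X]big_nat_cond [X in _ + X]big1 ?addr0; last first.
  move=> l /andP[/andP[h1 h2] _]; rewrite /F.
  case: (leqP i j) => hij.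
    have -> : (l < i)%N = false by lia.
    have -> : (l == i :> nat) = false by apply/eqP; lia.
    by rewrite mul0r.
  have -> : (l <= j)%N = false by lia.
  by rewrite mulr0.
rewrite /partial_entry minnSS big_add1 /= addrC; congr (_ + _).
  rewrite /F; case: (leqP i j) => hij.
    by rewrite ltnn eqxx hij mul1r.
  have -> : (j <= j)%N by [].
  by rewrite hij divfK //; apply: pivots_nz; lia.
apply: eq_big_nat => l hl; rewrite /F.
have -> : (l < i)%N by lia.
have -> : (l <= j)%N by lia.
by rewrite mulrAC.
Qed.

(* Both factors are triangular with nonzero diagonal entries. *)
Lemma backward_matrix_unit : B \in unitmx.
Proof.
rewrite backward_matrix_LU unitmx_mul !unitmxE -(det_tr pivot_matrix) !det_trig.
- rewrite !unitfE; apply/andP; split; apply/prodf_neq0 => i _; rewrite !mxE.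
    by rewrite ltnn eqxx oner_neq0.
  by rewrite leqnn; apply: pivots_nz; have := ltn_ord i; lia.
- apply/is_trig_mxP => i j hij; rewrite !mxE.
  by rewrite ifF ?ifF //; apply/negbTE; lia.
by apply/is_trig_mxP => i j hij; rewrite !mxE ifF //; lia.
Qed.

End BackwardMatrix.

Theorem mainTheorem8 (R : realFieldType) (beta t n : nat)
  (hbeta : (2 <= beta)%N) (ht : (1 <= t)%N)
  (A : 'M[R]_n) (th ph : nat -> nat -> nat -> R) (vp : nat -> nat -> R) :
  let u := unit_roundoff R beta t in
  fp_params u th ph vp ->
  PPhat A th ph vp ->
  exists B : 'M[R]_n, PP B /\
    (forall k i j, (1 <= k <= n)%N -> (k <= i <= n)%N -> (k <= j <= n)%N ->
       (i == k) || (j == k) -> bel B k i j = ahat A th ph vp k i j) /\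
    (forall k i j, (1 <= k < n)%N -> (k <= i <= n)%N -> (k <= j <= n)%N ->
       `|ahat A th ph vp k i j - bel B k i j| <=
         u * \sum_(k <= l < minn i j)
               (`|ahat A th ph vp l i j| + `|ahat A th ph vp l l j| * (3 + u))).
Proof.
move=> u hfp hPP; have [_ [Hpiv [Hdom _]]] := hPP.
exists (@backward_matrix R n A th ph vp).
have edge := @bel_backward_matrix_edge R n A th ph vp.
split; [split; [exact: backward_matrix_unit | split] | split].
- by move=> k hk; rewrite edge ?eqxx //; [apply: Hpiv | ..]; lia.
- by move=> k i hk hi; rewrite !edge ?eqxx ?orbT //; [apply: Hdom | ..]; lia.
- by move=> k i j /andP[hk _]; apply: edge.
- move=> k i j hk hi hj; rewrite bel_backward_matrix; try lia.
  by apply: backward_error_bound => //; lia.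
Qed.
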